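(* Let $\alpha,\beta>0$ with $\beta\neq\alpha$, and set $\tau=(\beta-\alpha)^{-1}$. Let $S_0>0$, $I_0\ge 0$, $R_0$ be real numbers with $S_0+I_0+R_0=1$. Then the solution of the system $$\dot S=-\frac{\beta SI}{S+I},\qquad \dot I=\frac{\beta SI}{S+I}-\alpha I,\qquad \dot R=\alpha I$$ with initial conditions $S(0)=S_0$, $I(0)=I_0$, $R(0)=R_0$ is given by $$S(t)=S_0\left(\frac{S_0+I_0}{S_0+I_0e^{t/\tau}}\right)^{\beta\tau},\qquad I(t)=I_0\left(\frac{S_0+I_0}{S_0+I_0e^{t/\tau}}\right)^{\beta\tau}e^{t/\tau},\qquad R(t)=1-\frac{(S_0+I_0)^{\beta\tau}}{(S_0+I_0e^{t/\tau})^{\beta\tau-1}}.$$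
   Context: This is the ''modified SIR'' epidemiological model, in which $S,I,R$ denote the fractions of susceptible, infective and recovered (removed) individuals; the total population $S+I+R$ is conserved and normalized to $1$. *)

From Stdlib Require Import Reals Lra.
Open Scope R_scope.

Definition sir_is_solution (alpha beta : R) (S I Rr : R -> R) : Prop :=
  forall t : R,
    S t + I t <> 0 /\
    derivable_pt_lim S t (- (beta * S t * I t / (S t + I t))) /\
    derivable_pt_lim I t (beta * S t * I t / (S t + I t) - alpha * I t) /\
    derivable_pt_lim Rr t (alpha * I t).

Definition sir_tau (alpha beta : R) : R := / (beta - alpha).

Definition S_exact (alpha beta S0 I0 : R) (t : R) : R :=
  let tau := sir_tau alpha beta in
  S0 * Rpower ((S0 + I0) / (S0 + I0 * exp (t / tau))) (beta * tau).

Definition I_exact (alpha beta S0 I0 : R) (t : R) : R :=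
  let tau := sir_tau alpha beta in
  I0 * Rpower ((S0 + I0) / (S0 + I0 * exp (t / tau))) (beta * tau)
     * exp (t / tau).

Definition R_exact (alpha beta S0 I0 : R) (t : R) : R :=
  let tau := sir_tau alpha beta in
  1 - Rpower (S0 + I0) (beta * tau)
      / Rpower (S0 + I0 * exp (t / tau)) (beta * tau - 1).

(* The proportion [x = S/(S+I)] obeys the logistic equation
   [x' = -(beta - alpha) x (1 - x)], whose solution is [x = S0 / u] with
   [u t = S0 + I0 e^{t/tau}]; indeed [S u - S0 (S+I)] solves a scalar linear
   ODE and vanishes at [0].  Knowing [x], the total [N = S + I] solves the
   linear ODE [N' = -alpha I = -alpha (1-x) N], which integrates to
   [N = ((S0+I0)/u)^(beta tau) u].  Finally [R + N] is constant.  Uniqueness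
   throughout comes from the fact that two solutions of [y' = a y], one of
   them nowhere zero, have constant ratio. *)
From Stdlib Require Import Reals Lra.
Open Scope R_scope.

Local Notation dpl := derivable_pt_lim.

Lemma dpl_eq f x l l' : dpl f x l -> l = l' -> dpl f x l'.
Proof. intros H <-; exact H. Qed.

Lemma dpl_const c x : dpl (fun _ => c) x 0.
Proof. exact (derivable_pt_lim_const c x). Qed.

Lemma dpl_id x : dpl (fun y => y) x 1.
Proof. exact (derivable_pt_lim_id x). Qed.

Lemma dpl_plus f g x a b :
  dpl f x a -> dpl g x b -> dpl (fun y => f y + g y) x (a + b).
Proof. exact (derivable_pt_lim_plus f g x a b). Qed.

Lemma dpl_minus f g x a b :
  dpl f x a -> dpl g x b -> dpl (fun y => f y - g y) x (a - b).
Proof. exact (derivable_pt_lim_minus f g x a b). Qed.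

Lemma dpl_mult f g x a b :
  dpl f x a -> dpl g x b -> dpl (fun y => f y * g y) x (a * g x + f x * b).
Proof. exact (derivable_pt_lim_mult f g x a b). Qed.

Lemma dpl_div f g x a b : dpl f x a -> dpl g x b -> g x <> 0 ->
  dpl (fun y => f y / g y) x ((a * g x - b * f x) / (g x)²).
Proof. exact (derivable_pt_lim_div f g x a b). Qed.

Lemma dpl_exp f x a : dpl f x a -> dpl (fun y => exp (f y)) x (exp (f x) * a).
Proof.
intros Hf; exact (derivable_pt_lim_comp f exp x a _ Hf (derivable_pt_lim_exp (f x))).
Qed.

Lemma dpl_ln f x a : dpl f x a -> 0 < f x -> dpl (fun y => ln (f y)) x (/ f x * a).
Proof.
intros Hf Hpos; exact (derivable_pt_lim_comp f ln x a _ Hf (derivable_pt_lim_ln _ Hpos)).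
Qed.

Lemma derive0_constant f : (forall t, dpl f t 0) -> constant f.
Proof. intros Hf; exact (null_derivative_1 f (fun t => exist _ 0 (Hf t)) (fun _ => eq_refl)). Qed.

Lemma linear_ode_proportional (a f g : R -> R) :
  (forall t, dpl f t (a t * f t)) -> (forall t, dpl g t (a t * g t)) ->
  (forall t, g t <> 0) -> forall t, f t * g 0 = f 0 * g t.
Proof.
intros Hf Hg Hg0 t.
assert (Hratio : constant (fun t => f t / g t)).
{ apply derive0_constant; intro s.
  eapply dpl_eq; [apply dpl_div; auto |].
  unfold Rsqr; field; auto. }
specialize (Hratio t 0); simpl in Hratio.
replace (f t) with (f t / g t * g t) by (field; auto).
rewrite Hratio; field; auto.
Qed.

Section ModifiedSIR.

Variables alpha beta S0 I0 : R.
Hypotheses (hne : beta <> alpha) (hS0 : 0 < S0) (hI0 : 0 <= I0).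

(* In the paper's notation: [sir_growth t = e^{t/tau}], [sir_denom = u],
   [sir_decay = ((S0+I0)/u)^(beta tau)] and [sir_total] is the exact [S + I]. *)
Definition sir_growth t := exp (t * (beta - alpha)).
Definition sir_denom t := S0 + I0 * sir_growth t.
Definition sir_infected_share t := I0 * sir_growth t / sir_denom t.
Definition sir_decay t :=
  exp (beta / (beta - alpha) * (ln (S0 + I0) - ln (sir_denom t))).
Definition sir_total t := sir_decay t * sir_denom t.

Lemma sir_growth_pos t : 0 < sir_growth t.
Proof. apply exp_pos. Qed.

Lemma sir_denom_pos t : 0 < sir_denom t.
Proof. unfold sir_denom; generalize (sir_growth_pos t); nra. Qed.

Lemma sir_total_pos t : 0 < sir_total t.
Proof. apply Rmult_lt_0_compat; [apply exp_pos | apply sir_denom_pos]. Qed.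

Lemma sir_total0 : sir_total 0 = S0 + I0.
Proof.
unfold sir_total, sir_decay, sir_denom, sir_growth.
rewrite Rmult_0_l, exp_0, Rmult_1_r, Rminus_diag, Rmult_0_r, exp_0; ring.
Qed.

Lemma div_sir_tau t : t / sir_tau alpha beta = t * (beta - alpha).
Proof. unfold sir_tau, Rdiv; rewrite Rinv_inv; ring. Qed.

Lemma ln_ratio_sir_denom t :
  ln ((S0 + I0) / sir_denom t) = ln (S0 + I0) - ln (sir_denom t).
Proof.
generalize (sir_denom_pos t); intro Hu.
unfold Rdiv; rewrite ln_mult, ln_Rinv; [ring | exact Hu | lra | apply Rinv_0_lt_compat, Hu].
Qed.

Lemma S_exactE t : S_exact alpha beta S0 I0 t = S0 * sir_decay t.
Proof.
unfold S_exact, Rpower, sir_decay; rewrite div_sir_tau.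
fold (sir_growth t) (sir_denom t); rewrite ln_ratio_sir_denom.
unfold sir_tau, Rdiv; do 3 f_equal; ring.
Qed.

Lemma I_exactE t : I_exact alpha beta S0 I0 t = I0 * sir_decay t * sir_growth t.
Proof.
unfold I_exact, Rpower, sir_decay; rewrite div_sir_tau.
fold (sir_growth t) (sir_denom t); rewrite ln_ratio_sir_denom.
unfold sir_tau, Rdiv; do 4 f_equal; ring.
Qed.

Lemma R_exactE t : R_exact alpha beta S0 I0 t = 1 - sir_total t.
Proof.
unfold R_exact, Rpower; rewrite div_sir_tau.
fold (sir_growth t) (sir_denom t); f_equal.
unfold sir_total, sir_decay.
set (g := beta / (beta - alpha)).
replace (beta * sir_tau alpha beta) with g by (unfold g, sir_tau, Rdiv; ring).
replace (g * ln (S0 + I0))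
  with (g * (ln (S0 + I0) - ln (sir_denom t)) + ln (sir_denom t)
        + (g - 1) * ln (sir_denom t)) by ring.
rewrite !exp_plus, exp_ln by apply sir_denom_pos.
field; apply Rgt_not_eq, exp_pos.
Qed.

Lemma dpl_sir_growth t : dpl sir_growth t ((beta - alpha) * sir_growth t).
Proof.
eapply dpl_eq; [apply dpl_exp, dpl_mult; [apply dpl_id | apply dpl_const] |].
unfold sir_growth; ring.
Qed.

Lemma dpl_sir_denom t :
  dpl sir_denom t ((beta - alpha) * (sir_infected_share t * sir_denom t)).
Proof.
eapply dpl_eq.
{ apply dpl_plus; [apply dpl_const | apply dpl_mult; [apply dpl_const | apply dpl_sir_growth]]. }
unfold sir_infected_share; field; apply Rgt_not_eq, sir_denom_pos.
Qed.

Lemma dpl_sir_decay t :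
  dpl sir_decay t (- beta * sir_infected_share t * sir_decay t).
Proof.
eapply dpl_eq.
{ apply dpl_exp, dpl_mult; [apply dpl_const |].
  apply dpl_minus; [apply dpl_const | apply dpl_ln; [apply dpl_sir_denom | apply sir_denom_pos]]. }
cbv beta; fold (sir_decay t); field; split; [apply Rgt_not_eq, sir_denom_pos | lra].
Qed.

Lemma dpl_sir_total t :
  dpl sir_total t (- alpha * sir_infected_share t * sir_total t).
Proof.
eapply dpl_eq; [apply dpl_mult; [apply dpl_sir_decay | apply dpl_sir_denom] |].
unfold sir_total; ring.
Qed.

Lemma sir_exact_is_solution :
  sir_is_solution alpha beta (S_exact alpha beta S0 I0)
    (I_exact alpha beta S0 I0) (R_exact alpha beta S0 I0).
Proof.
assert (Htotal : forall t,
  S_exact alpha beta S0 I0 t + I_exact alpha beta S0 I0 t = sir_total t).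
{ intro t; rewrite S_exactE, I_exactE; unfold sir_total, sir_denom; ring. }
assert (Hshare : forall t,
  I_exact alpha beta S0 I0 t = sir_infected_share t * sir_total t).
{ intro t; rewrite I_exactE; unfold sir_infected_share, sir_total.
  field; apply Rgt_not_eq, sir_denom_pos. }
assert (Hu : forall t, sir_denom t <> 0) by (intro; apply Rgt_not_eq, sir_denom_pos).
assert (Hd : forall t, sir_decay t <> 0) by (intro; apply Rgt_not_eq, exp_pos).
intro t; rewrite Htotal; repeat split.
- apply Rgt_not_eq, sir_total_pos.
- apply (derivable_pt_lim_ext (fun y => S0 * sir_decay y)).
  { intro; symmetry; apply S_exactE. }
  eapply dpl_eq; [apply dpl_mult; [apply dpl_const | apply dpl_sir_decay] |].
  rewrite S_exactE, I_exactE; unfold sir_infected_share, sir_total.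
  field; auto.
- apply (derivable_pt_lim_ext (fun y => I0 * sir_decay y * sir_growth y)).
  { intro; symmetry; apply I_exactE. }
  eapply dpl_eq.
  { apply dpl_mult; [apply dpl_mult; [apply dpl_const | apply dpl_sir_decay] |
                     apply dpl_sir_growth]. }
  rewrite S_exactE, I_exactE; unfold sir_infected_share, sir_total, sir_denom.
  field; split; [apply (Hu t) | apply Hd].
- apply (derivable_pt_lim_ext (fun y => 1 - sir_total y)).
  { intro; symmetry; apply R_exactE. }
  eapply dpl_eq; [apply dpl_minus; [apply dpl_const | apply dpl_sir_total] |].
  rewrite Hshare; ring.
Qed.

Lemma sir_exact_initial :
  S_exact alpha beta S0 I0 0 = S0 /\ I_exact alpha beta S0 I0 0 = I0 /\
  R_exact alpha beta S0 I0 0 = 1 - S0 - I0.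
Proof.
assert (Hdecay : sir_decay 0 = 1).
{ unfold sir_decay, sir_denom, sir_growth.
  rewrite Rmult_0_l, exp_0, Rmult_1_r, Rminus_diag, Rmult_0_r; apply exp_0. }
rewrite S_exactE, I_exactE, R_exactE, sir_total0, Hdecay.
unfold sir_growth; rewrite Rmult_0_l, exp_0; repeat split; ring.
Qed.

Section Uniqueness.

Hypothesis halpha : alpha <> 0.
Variables S I Rr : R -> R.
Hypotheses (Hsol : sir_is_solution alpha beta S I Rr)
  (HS0 : S 0 = S0) (HI0 : I 0 = I0).

Let N t := S t + I t.

Lemma dpl_S_plus_I t : dpl N t (- alpha * I t).
Proof.
destruct (Hsol t) as (_ & HS & HI & _).
eapply dpl_eq; [apply dpl_plus; [exact HS | exact HI] | ring].
Qed.

Lemma susceptible_share_eq t : S t * sir_denom t = S0 * N t.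
Proof.
pose (a t := beta * S t / N t - alpha).
pose (f t := S t * sir_denom t - S0 * N t).
(* The integrating factor [e^{(beta-alpha) t} |N t|^(beta/alpha)]; writing
   [ln (N t)²] avoids having to know the sign of [N]. *)
pose (g t := exp ((beta - alpha) * t + beta / (2 * alpha) * ln (N t)²)).
assert (HN : forall t, N t <> 0) by (intro s; apply (Hsol s)).
assert (Hf : forall t, dpl f t (a t * f t)).
{ intro s; destruct (Hsol s) as (_ & HS & _).
  eapply dpl_eq.
  { apply dpl_minus; [apply dpl_mult; [exact HS | apply dpl_sir_denom] |
                      apply dpl_mult; [apply dpl_const | apply dpl_S_plus_I]]. }
  generalize (HN s) (sir_denom_pos s).
  unfold a, f, N, sir_infected_share, sir_denom; cbv beta; intros.
  field; lra. }
assert (Hg : forall t, dpl g t (a t * g t)).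
{ intro s; eapply dpl_eq.
  { apply dpl_exp, dpl_plus.
    - apply dpl_mult; [apply dpl_const | apply dpl_id].
    - apply dpl_mult; [apply dpl_const |].
      apply dpl_ln; [apply dpl_mult; apply dpl_S_plus_I | apply Rsqr_pos_lt, HN]. }
  generalize (HN s); cbv beta; fold (g s); unfold a, N, Rsqr; intro.
  field; split; assumption. }
assert (Hf0 : f 0 = 0).
{ unfold f, N, sir_denom, sir_growth; rewrite HS0, HI0, Rmult_0_l, exp_0; ring. }
assert (Hft : f t = 0).
{ apply (Rmult_eq_reg_r (g 0)); [| apply Rgt_not_eq, exp_pos].
  rewrite (linear_ode_proportional a f g Hf Hg (fun s => Rgt_not_eq _ _ (exp_pos _)) t).
  rewrite Hf0; ring. }
unfold f in Hft; lra.
Qed.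

Lemma infected_share_eq t : I t = sir_infected_share t * N t.
Proof.
replace (I t) with (N t - S t) by (unfold N; ring).
apply (Rmult_eq_reg_r (sir_denom t)); [| apply Rgt_not_eq, sir_denom_pos].
rewrite Rmult_minus_distr_r, susceptible_share_eq.
unfold sir_infected_share, sir_denom; field.
fold (sir_denom t); apply Rgt_not_eq, sir_denom_pos.
Qed.

Lemma S_plus_I_eq_total t : N t = sir_total t.
Proof.
assert (HN : forall t, dpl N t (- alpha * sir_infected_share t * N t)).
{ intro s; eapply dpl_eq; [apply dpl_S_plus_I | rewrite infected_share_eq; ring]. }
generalize (linear_ode_proportional _ N sir_total HN dpl_sir_total
              (fun t => Rgt_not_eq _ _ (sir_total_pos t)) t).
unfold N at 2; rewrite sir_total0, HS0, HI0; intro Hprop.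
apply (Rmult_eq_reg_r (S0 + I0)); [lra | apply Rgt_not_eq; lra].
Qed.

Lemma sir_solution_unique (HR0 : Rr 0 = 1 - S0 - I0) t :
  S t = S_exact alpha beta S0 I0 t /\ I t = I_exact alpha beta S0 I0 t /\
  Rr t = R_exact alpha beta S0 I0 t.
Proof.
assert (HRN : constant (fun t => Rr t + N t)).
{ apply derive0_constant; intro s; destruct (Hsol s) as (_ & _ & _ & HR).
  eapply dpl_eq; [apply dpl_plus; [exact HR | apply dpl_S_plus_I] | ring]. }
assert (HSt : S t = S0 * sir_decay t).
{ apply (Rmult_eq_reg_r (sir_denom t)); [| apply Rgt_not_eq, sir_denom_pos].
  rewrite susceptible_share_eq, S_plus_I_eq_total; unfold sir_total; ring. }
assert (HIt : I t = I0 * sir_decay t * sir_growth t).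
{ replace (I t) with (N t - S t) by (unfold N; ring).
  rewrite S_plus_I_eq_total, HSt; unfold sir_total, sir_denom; ring. }
rewrite S_exactE, I_exactE, R_exactE; repeat split; auto.
specialize (HRN t 0); simpl in HRN.
rewrite <- S_plus_I_eq_total; unfold N in HRN |- *; rewrite HR0, HS0, HI0 in HRN; lra.
Qed.

End Uniqueness.

End ModifiedSIR.

Theorem mainTheorem1 (alpha beta S0 I0 R0 : R)
  (halpha : 0 < alpha) (hbeta : 0 < beta) (hne : beta <> alpha)
  (hS0 : 0 < S0) (hI0 : 0 <= I0) (hsum : S0 + I0 + R0 = 1) :
  (* existence: the closed-form functions solve the initial value problem *)
  (sir_is_solution alpha beta (S_exact alpha beta S0 I0)
       (I_exact alpha beta S0 I0) (R_exact alpha beta S0 I0) /\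
   S_exact alpha beta S0 I0 0 = S0 /\
   I_exact alpha beta S0 I0 0 = I0 /\
   R_exact alpha beta S0 I0 0 = R0) /\
  (* uniqueness: every solution of the IVP coincides with the closed form *)
  (forall S I Rr : R -> R,
     sir_is_solution alpha beta S I Rr ->
     S 0 = S0 -> I 0 = I0 -> Rr 0 = R0 ->
     forall t : R,
       S t = S_exact alpha beta S0 I0 t /\
       I t = I_exact alpha beta S0 I0 t /\
       Rr t = R_exact alpha beta S0 I0 t).
Proof.
replace R0 with (1 - S0 - I0) by lra.
split.
- split; [exact (sir_exact_is_solution alpha beta S0 I0 hne hS0 hI0) |].
  exact (sir_exact_initial alpha beta S0 I0 hS0 hI0).
- intros S I Rr Hsol HS HI HR.
  exact (sir_solution_unique alpha beta S0 I0 hne hS0 hI0 (Rgt_not_eq _ _ halpha)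
           S I Rr Hsol HS HI HR).
Qed.
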